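(* Let $V$ be a countable set, $\Omega_0$ a finite set, $\Omega=\Omega_0^V$, $q\in\mathbb N$, and let $\Phi=\{\Phi_B\}_{B\Subset V}$ be an absolutely summable potential, i.e. each $\Phi_B:\Omega\to\mathbb R$ is $\mathcal F_B$-measurable and $\sum_{B\Subset V,\,B\ni x}\|\Phi_B\|_\infty<\infty$ for every $x\in V$. For $\Lambda\Subset V$, $\sigma_\Lambda\in\Omega_\Lambda=\Omega_0^\Lambda$ and $\omega_1,\dots,\omega_q\in\Omega$ set $$H_{\Lambda,\Phi}(\sigma_\Lambda;\omega_1,\dots,\omega_q)=\sum_{B\subseteq\Lambda}\Phi_B(\sigma_\Lambda)+\frac1q\sum_{\substack{B\Subset V\\ B\cap\Lambda\ne\emptyset,\ B\cap\Lambda^c\ne\emptyset}}\sum_{i=1}^q\Phi_B(\sigma_\Lambda\omega_{i,\Lambda^c}),$$ and define the Gibbs $q$-specification $\gamma^\Phi=(\gamma^\Phi_\Lambda)_{\Lambda\Subset V}$ by $$\gamma^\Phi_\Lambda(A\mid\omega_1,\dots,\omega_q)=\frac{1}{Z_\Lambda(\omega_1,\dots,\omega_q)}\sum_{\sigma_\Lambda\in\Omega_\Lambda}e^{-H_{\Lambda,\Phi}(\sigma_\Lambda;\omega_1,\dots,\omega_q)}\,\frac1q\sum_{i=1}^q\mathbf 1_A(\sigma_\Lambda\omega_{i,\Lambda^c}),\quad A\in\mathcal F,$$ with $Z_\Lambda(\omega_1,\dots,\omega_q)=\sum_{\sigma_\Lambda\in\Omega_\Lambda}e^{-H_{\Lambda,\Phi}(\sigma_\Lambda;\omega_1,\dots,\omega_q)}$.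 Then $\gamma^\Phi$ is quasilocal.
   Context: $\mathcal F$ is the product $\sigma$-algebra on $\Omega$; $\mathcal F_B$ is the $\sigma$-algebra generated by the coordinates in $B$; a function $\Phi_B$ that is $\mathcal F_B$-measurable is regarded as a function of the configuration on $B$, so $\Phi_B(\sigma_\Lambda)$ makes sense for $B\subseteq\Lambda$. $\sigma_\Lambda\omega_{\Lambda^c}$ is the configuration equal to $\sigma_\Lambda$ on $\Lambda$ and to $\omega$ on $\Lambda^c$. $\Omega$ carries the topology of coordinatewise convergence and $\Omega^q$ the product topology. A family $(\gamma_\Lambda)_{\Lambda\Subset V}$ of kernels is quasilocal if for each $\Lambda\Subset V$ and every event $A\in\mathcal F_\Lambda$ the map $(\omega_1,\dots,\omega_q)\mapsto\gamma_\Lambda(A\mid\omega_1,\dots,\omega_q)$ is continuous on $\Omega^q$. *)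

From HB Require Import structures.
From mathcomp Require Import all_boot all_order all_algebra finmap.
From mathcomp Require Import all_classical all_reals all_analysis.

Set Implicit Arguments.
Unset Strict Implicit.
Unset Printing Implicit Defensive.

Import Order.TTheory GRing.Theory Num.Theory.
Import numFieldNormedType.Exports.
Local Open Scope classical_set_scope.
Local Open Scope ring_scope.

Definition config (V : Type) (O0 : choiceType) : Type :=
  prod_topology (fun _ : V => discrete_topology O0).

Definition qconfig (V : Type) (O0 : choiceType) (q : nat) : Type :=
  prod_topology (fun _ : 'I_q => config V O0).

Definition coordF (V : choiceType) (O0 : choiceType) (B : {fset V})
  : set (set (config V O0)) :=
  <<s [set E | exists (x : V) (S : set O0),
          x \in B /\ E = (fun w : config V O0 => w x) @^-1` S] >>.

Definition F_measurable (V : choiceType) (O0 : choiceType) (R : realType)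
  (B : {fset V}) (f : config V O0 -> R) : Prop :=
  forall Y : set R, measurable Y -> coordF B (f @^-1` Y).

Definition supnorm (T : Type) (R : realType) (f : T -> R) : \bar R :=
  ereal_sup (range (fun w => (`|f w|)%:E)).

Definition potential (V : choiceType) (O0 : choiceType) (R : realType) :=
  {fset V} -> config V O0 -> R.

Definition abs_summable_potential (V : choiceType) (O0 : choiceType)
  (R : realType) (Phi : potential V O0 R) : Prop :=
  (forall B, F_measurable B (Phi B)) /\
  (forall x : V, (\esum_(B in [set B : {fset V} | x \in B]) supnorm (Phi B) < +oo)%E).

Definition rsum (T : choiceType) (R : realType) (D : set T) (f : T -> R) : R :=
  fine (\esum_(i in D) ((EFin \o f)^\+ i))%E - fine (\esum_(i in D) ((EFin \o f)^\- i))%E.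

Definition glue (V : choiceType) (O0 : choiceType) (L : {fset V})
  (s : {ffun L -> O0}) (w : config V O0) : config V O0 :=
  fun x => if (insub x : option L) is Some y then s y else w x.

Section Gibbs.
Variables (V : choiceType) (O0 : finType) (R : realType).
Variable (Phi : potential V O0 R).

(* Phi_B(sigma_Lambda) for B subset of Lambda: Phi_B evaluated at any
   extension of sigma_Lambda (we use omega_1; independent of the choice
   since Phi_B is F_B-measurable). *)
Definition phi_in (L : {fset V}) (s : {ffun L -> O0}) (B : {fset V}) (q : nat)
  : (qconfig V O0 q) -> R :=
  match q as n return qconfig V O0 n -> R with
  | 0 => fun _ => 0
  | n.+1 => fun ws => Phi B (glue s (ws ord0))
  end.


Definition H (q : nat) (L : {fset V}) (s : {ffun L -> O0}) (ws : qconfig V O0 q) : R :=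
  \sum_(B <- fpowerset L) phi_in s B ws
  + q%:R^-1 * rsum [set B : {fset V} | (B `&` L)%fset != fset0 /\
                                       exists x, x \in B /\ x \notin L]
                   (fun B => \sum_(i < q) Phi B (glue s (ws i))).

Definition Z (q : nat) (L : {fset V}) (ws : qconfig V O0 q) : R :=
  \sum_(s : {ffun L -> O0}) expR (- H s ws).

Definition gamma (q : nat) (L : {fset V}) (A : set (config V O0))
  (ws : qconfig V O0 q) : R :=
  (Z L ws)^-1 * \sum_(s : {ffun L -> O0})
     expR (- H s ws) * (q%:R^-1 * \sum_(i < q) \1_A (glue s (ws i))).

End Gibbs.

Definition quasilocal (V : choiceType) (O0 : choiceType) (R : realType) (q : nat)
  (g : {fset V} -> set (config V O0) -> qconfig V O0 q -> R) : Prop :=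
  forall (L : {fset V}) (A : set (config V O0)), coordF L A ->
    continuous (fun ws : qconfig V O0 q => (g L A ws : R)).

(* Every term Phi_B(sigma_L omega_{i,L^c}) is F_B-measurable in omega_i, so it
   depends on finitely many coordinates of (omega_1, ..., omega_q) and is locally
   constant; for A in F_L, 1_A(sigma_L omega_{i,L^c}) does not depend on omega at
   all.  The boundary series in H is dominated, uniformly in omega, by
   q * sum_{x in L} sum_{B containing x} ||Phi_B||, which is finite by absolute
   summability; its finite partial sums therefore converge uniformly and the
   series is continuous.  Hence H, the weights e^{-H} and Z > 0 are continuous
   on Omega^q, and so is gamma. *)

From Pilot Require Import Defs.
From HB Require Import structures.
From mathcomp Require Import all_boot all_order all_algebra finmap.
From mathcomp Require Import all_classical all_reals all_analysis.
From mathcomp Require Import lra.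

Set Implicit Arguments.
Unset Strict Implicit.
Unset Printing Implicit Defensive.

Import Order.TTheory GRing.Theory Num.Theory.
Import numFieldNormedType.Exports.
Local Open Scope classical_set_scope.
Local Open Scope ring_scope.

Lemma continuous_uniform_approx (R : realType) (T : topologicalType) (f : T -> R) :
  (forall e, 0 < e -> exists2 g : T -> R, continuous g & forall t, `|f t - g t| <= e) ->
  continuous f.
Proof.
move=> approx t0; apply/cvgrPdist_lt => e e0.
have e3_gt0 : 0 < e / 3 by rewrite divr_gt0.
have [g g_cont fg] := approx (e / 3) e3_gt0.
have /cvgrPdist_lt /(_ (e / 3) e3_gt0) := g_cont t0.
apply: filterS => t.
move: (fg t0) (fg t); rewrite !ler_norml !ltr_norml.
move=> /andP[? ?] /andP[? ?] /andP[? ?].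
apply/andP; split; lra.
Qed.

Section SummableFamilies.
Variables (R : realType) (I : choiceType).

Lemma esum_tail_lt (D : set I) (c : I -> \bar R) (e : R) :
  (forall i, D i -> 0 <= c i)%E -> (\esum_(i in D) c i < +oo)%E -> 0 < e ->
  exists2 X, fsets D X & (\esum_(i in D `\` X) c i < e%:E)%E.
Proof.
move=> c0 cfin e0.
set S := esum D c.
have S_fin : S \is a fin_num by rewrite ge0_fin_numE ?esum_ge0.
have /ereal_sup_gt[_ [X [finX XD] <-] ltX] : ((fine S - e)%:E < S)%E.
  by rewrite -{2}(fineK S_fin) lte_fin gtrBl.
exists X => //.
have splitS : S = (\sum_(i \in X) c i + \esum_(i in D `\` X) c i)%E.
  by rewrite /S (esumID X) // setDE (setIidr XD) esum_fset // => i /[!inE] /XD /c0.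
move: ltX S_fin; rewrite splitS fin_numD => ltX /andP[Xfin Tfin].
move: ltX; rewrite -(fineK Xfin) -(fineK Tfin) -EFinD /= !lte_fin; lra.
Qed.

Lemma fine_esum_sub_fsum (D X : set I) (u : I -> R) (c : I -> \bar R) :
  finite_set X -> X `<=` D ->
  (forall i, D i -> 0 <= u i) -> (forall i, D i -> (u i)%:E <= c i)%E ->
  (\esum_(i in D `\` X) c i < +oo)%E ->
  0 <= fine (\esum_(i in D) (u i)%:E) - \sum_(i \in X) u i
    <= fine (\esum_(i in D `\` X) c i).
Proof.
move=> finX XD u0 uc tail_fin.
have Tu0 : (0 <= \esum_(i in D `\` X) (u i)%:E)%E.
  by apply: esum_ge0 => i [/u0]; rewrite lee_fin.
have Tuc : (\esum_(i in D `\` X) (u i)%:E <= \esum_(i in D `\` X) c i)%E.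
  by apply: le_esum => i [/uc].
have Tu_fin : \esum_(i in D `\` X) (u i)%:E \is a fin_num.
  by rewrite ge0_fin_numE // (le_lt_trans Tuc).
have Tc_fin : \esum_(i in D `\` X) c i \is a fin_num.
  by rewrite ge0_fin_numE // (le_trans Tu0).
rewrite (esumID X) ?setDE ?(setIidr XD) => [|i /u0]; last by rewrite lee_fin.
rewrite esum_fset // => [|i /[!inE] /XD /u0]; last by rewrite lee_fin.
rewrite fsumEFin // -setDE -(fineK Tu_fin) -EFinD /=.
rewrite (addrC (\sum_(i \in X) u i)) addrK.
by move: Tu0 Tuc; rewrite -(fineK Tu_fin) -(fineK Tc_fin) !lee_fin => -> ->.
Qed.

Lemma rsum_sub_fsum_le (D X : set I) (f : I -> R) (c : I -> \bar R) :
  finite_set X -> X `<=` D -> (forall i, D i -> ((`|f i|)%:E <= c i)%E) ->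
  (\esum_(i in D `\` X) c i < +oo)%E ->
  `|rsum D f - \sum_(i \in X) f i| <= fine (\esum_(i in D `\` X) c i).
Proof.
move=> finX XD fc tail_fin.
have max_ge0 (x : R) : 0 <= Num.max x 0 by rewrite le_max lexx orbT.
have parts_le_c (g : I -> R) : (forall i, D i -> `|g i| = `|f i|) ->
    forall i, D i -> ((Num.max (g i) 0)%:E <= c i)%E.
  move=> gf i Di; apply: le_trans (fc i Di); rewrite lee_fin -(gf i Di) ge_max.
  by rewrite normr_ge0 ler_norm.
have /andP[P1 P2] := fine_esum_sub_fsum finX XD
  (fun i _ => max_ge0 (f i)) (parts_le_c f (fun _ _ => erefl)) tail_fin.
have /andP[N1 N2] := fine_esum_sub_fsum finX XD
  (fun i _ => max_ge0 (- f i)) (parts_le_c (-%R \o f) (fun i _ => normrN _)) tail_fin.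
have -> : \sum_(i \in X) f i =
    \sum_(i \in X) Num.max (f i) 0 - \sum_(i \in X) Num.max (- f i) 0.
  rewrite !fsbig_finite //= -sumrB; apply: eq_bigr => i _.
  by rewrite !maxr_absE !subr0 normrN; lra.
rewrite /rsum.
have -> : esum D (EFin \o f)^\+%E = esum D (fun i => (Num.max (f i) 0)%:E).
  by apply: eq_esum => i _; rewrite funeposE /= EFin_max.
have -> : esum D (EFin \o f)^\-%E = esum D (fun i => (Num.max (- f i) 0)%:E).
  by apply: eq_esum => i _; rewrite funenegE /= EFin_max.
rewrite ler_norml; apply/andP; split; lra.
Qed.

Lemma rsum_continuous (T : topologicalType) (D : set I) (h : I -> T -> R)
    (c : I -> \bar R) :
  (forall i t, D i -> ((`|h i t|)%:E <= c i)%E) -> (\esum_(i in D) c i < +oo)%E ->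
  (forall i, continuous (h i)) -> continuous (fun t => rsum D (h^~ t)).
Proof.
move=> hc c_fin h_cont t0; apply: continuous_uniform_approx => e e0.
have c0 i : D i -> (0 <= c i)%E by move=> Di; apply: le_trans (hc i t0 Di).
have [X [finX XD] tail_lt] := esum_tail_lt c0 c_fin e0.
have tail_fin : (\esum_(i in D `\` X) c i < +oo)%E by apply: lt_trans tail_lt (ltry _).
exists (fun t => \sum_(i <- fset_set X) h i t).
  exact: (continuous_big add_continuous (fun i _ => h_cont i)).
move=> t; rewrite -fsbig_finite //.
apply: le_trans (rsum_sub_fsum_le finX XD (hc^~ t) tail_fin) _.
by rewrite -lee_fin fineK ?ltW // ge0_fin_numE // esum_ge0 // => i [/c0].
Qed.

Lemma esum_le_sum_cover (K : choiceType) (D : set I) (J : seq K)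
    (P : K -> I -> bool) (a : I -> \bar R) :
  (forall i, 0 <= a i)%E -> (forall i, D i -> exists2 k, k \in J & P k i) ->
  (\esum_(i in D) a i <= \sum_(k <- J) \esum_(i in [set i | P k i]) a i)%E.
Proof.
move=> a0 cover.
have restrict0 k i : (0 <= if P k i then a i else 0)%E by case: ifP.
apply: (@le_trans _ _ (\esum_(i in D) \sum_(k <- J) (if P k i then a i else 0))%E).
  apply: le_esum => i /cover [k kJ Pki].
  by rewrite (big_rem k kJ) /= Pki leeDl // sume_ge0.
rewrite esum_sum //; apply: lee_sum => k _.
rewrite esum_mkcond [leRHS]esum_mkcond; apply: le_esum => i _.
have -> : (i \in [set i | P k i]) = P k i by apply/idP/idP => [/set_mem|/mem_set].
by case: (i \in D).
Qed.

End SummableFamilies.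

(* [glue] alone would denote the gluing of functions of MathComp-Analysis,
   hence the qualified [Defs.glue] below. *)
Section CoordinateDependence.
Variables (V O0 : choiceType).

Definition agree_on (B : {fset V}) (w w' : config V O0) :=
  forall x, x \in B -> w x = w' x.

Lemma coordF_agree_on (B : {fset V}) (E : set (config V O0)) w w' :
  coordF B E -> agree_on B w w' -> E w -> E w'.
Proof.
move=> EB; move: w w'.
pose invariant E := forall w w', agree_on B w w' -> E w <-> E w'.
suff inv_E : invariant E by move=> w w' /inv_E ->.
apply: (smallest_sub _ _ EB); last first.
  by move=> _ [x [S [xB ->]]] w w' ag /=; rewrite (ag x xB).
split=> [w w' //|A invA w w' ag|F invF w w' ag].
- by split=> -[_ nA]; split=> // ?; apply: nA; apply/(invA _ _ ag).
- by split=> -[n _ Fn]; exists n => //; apply/(invF n w w' ag).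
Qed.

Lemma F_measurable_agree_on (R : realType) (B : {fset V}) (f : config V O0 -> R) w w' :
  F_measurable B f -> agree_on B w w' -> f w = f w'.
Proof.
by move=> fB ag; have /= -> := coordF_agree_on (fB _ (measurable_set1 (f w))) ag erefl.
Qed.

Lemma agree_on_glue (B L : {fset V}) (s : {ffun L -> O0}) w w' :
  agree_on B w w' -> agree_on B (Defs.glue s w) (Defs.glue s w').
Proof. by move=> ag x xB; rewrite /Defs.glue; case: insub => //; exact: ag. Qed.

Lemma agree_on_glue_support (L : {fset V}) (s : {ffun L -> O0}) w w' :
  agree_on L (Defs.glue s w) (Defs.glue s w').
Proof. by move=> x xL; rewrite /Defs.glue insubT. Qed.

End CoordinateDependence.

(* Instance resolution does not see through the [qconfig] alias. *)
Local Instance qconfig_nbhs_filter (V O0 : choiceType) (q : nat) (ws : qconfig V O0 q) :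
  Filter (nbhs ws) := nbhs_filter ws.

Section FinitelyDetermined.
Variables (V O0 : choiceType) (q : nat).

Lemma near_qconfig_coord (i : 'I_q) (x : V) (ws0 : qconfig V O0 q) :
  \forall ws \near ws0, ws i x = ws0 i x.
Proof.
have coord_cont : continuous (fun ws : qconfig V O0 q => ws i x).
  move=> ws; exact: (continuous_comp
    (@proj_continuous _ (fun _ : 'I_q => config V O0) i ws)
    (@proj_continuous _ (fun _ : V => discrete_topology O0) x _)).
apply: (coord_cont ws0 [set ws0 i x]).
by apply: open_nbhs_nbhs; split => //; exact: discrete_open.
Qed.

Lemma continuous_finitely_determined (T : topologicalType) (f : qconfig V O0 q -> T)
    (K : seq ('I_q * V)) :
  (forall ws ws', (forall p, p \in K -> ws p.1 p.2 = ws' p.1 p.2) -> f ws = f ws') ->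
  continuous f.
Proof.
move=> f_det ws0.
have near_K : \forall ws \near ws0, forall p, p \in K -> ws p.1 p.2 = ws0 p.1 p.2.
  elim: K {f_det} => [|p K IH]; first by near=> ws => p.
  near=> ws => p'; rewrite inE => /orP[/eqP->|p'K].
    by near: ws; exact: near_qconfig_coord.
  by move: p' p'K; near: ws.
move=> U /nbhs_singleton U_f; apply: filterS near_K => ws /f_det.
by rewrite /= => ->.
Unshelve. all: by end_near.
Qed.

Lemma continuous_glue_F_measurable (R : realType) (L B : {fset V}) (s : {ffun L -> O0})
    (i : 'I_q) (f : config V O0 -> R) :
  F_measurable B f -> continuous (fun ws : qconfig V O0 q => f (Defs.glue s (ws i))).
Proof.
move=> fB.
apply: (@continuous_finitely_determined _ _ [seq (i, x) | x <- B]) => ws ws' ag.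
apply: (F_measurable_agree_on fB); apply: agree_on_glue => x xB.
exact: (ag (i, x) (map_f _ xB)).
Qed.

Lemma continuous_glue_coordF (R : realType) (L : {fset V}) (s : {ffun L -> O0})
    (i : 'I_q) (A : set (config V O0)) :
  coordF L A -> continuous (fun ws : qconfig V O0 q => \1_A (Defs.glue s (ws i)) : R).
Proof.
move=> AL; apply: (@continuous_finitely_determined _ _ [::]) => ws ws' _.
have same w w' : A (Defs.glue s w) -> A (Defs.glue s w').
  exact: coordF_agree_on AL (agree_on_glue_support s _ _).
by rewrite /indic; congr (nat_of_bool _)%:R; apply/idP/idP => /set_mem/same/mem_set.
Qed.

End FinitelyDetermined.

Section Supnorm.
Variable R : realType.

Lemma supnorm_ge (T : Type) (f : T -> R) (t : T) : ((`|f t|)%:E <= supnorm f)%E.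
Proof. by apply: ereal_sup_ubound; exists t. Qed.

(* [w] only witnesses that [config V O0] is inhabited: on an empty type [supnorm]
   is [-oo]. *)
Lemma esum_supnorm_meeting_lt (V O0 : choiceType) (Phi : potential V O0 R)
    (L : {fset V}) (D : set {fset V}) (w : config V O0) :
  (forall x, \esum_(B in [set B : {fset V} | x \in B]) supnorm (Phi B) < +oo)%E ->
  (forall B, D B -> (B `&` L)%fset != fset0) ->
  (\esum_(B in D) supnorm (Phi B) < +oo)%E.
Proof.
move=> Phi_sum DL.
apply: le_lt_trans (@esum_le_sum_cover _ _ _ D (L : seq V) (fun x B => x \in B)
  (fun B => supnorm (Phi B)) _ _) _.
- by move=> B; apply: le_trans (supnorm_ge (Phi B) w).
- by move=> B /DL /fset0Pn [x]; rewrite in_fsetI => /andP[xB xL]; exists x.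
- by apply: lte_sum_pinfty => x _; exact: Phi_sum.
Qed.

End Supnorm.

Section GibbsContinuity.
Variables (V : choiceType) (O0 : finType) (R : realType) (Phi : potential V O0 R).
Hypothesis Phi_meas : forall B, F_measurable B (Phi B).
Hypothesis Phi_sum :
  forall x, (\esum_(B in [set B : {fset V} | x \in B]) supnorm (Phi B) < +oo)%E.
Variables (q : nat) (L : {fset V}).

Lemma continuous_phi_in (s : {ffun L -> O0}) (B : {fset V}) :
  continuous (fun ws : qconfig V O0 q => phi_in Phi s B ws).
Proof.
rewrite /phi_in; case: q => [|n]; first exact: cst_continuous.
exact: continuous_glue_F_measurable.
Qed.

Lemma continuous_glue_sum (s : {ffun L -> O0}) (B : {fset V}) :
  continuous (fun ws : qconfig V O0 q => \sum_(i < q) Phi B (Defs.glue s (ws i))).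
Proof.
apply: (continuous_big add_continuous) => i _.
exact: continuous_glue_F_measurable.
Qed.

Lemma continuous_boundary_sum (s : {ffun L -> O0}) (D : set {fset V}) :
  (forall B, D B -> (B `&` L)%fset != fset0) ->
  continuous (fun ws : qconfig V O0 q =>
    rsum D (fun B => \sum_(i < q) Phi B (Defs.glue s (ws i)))).
Proof.
move=> DL ws0.
have dominated B (ws : qconfig V O0 q) : D B ->
    ((`|\sum_(i < q) Phi B (Defs.glue s (ws i))|)%:E <= \sum_(i < q) supnorm (Phi B))%E.
  move=> _; apply: le_trans (_ : (\sum_(i < q) `|Phi B (Defs.glue s (ws i))|)%:E <= _)%E.
    by rewrite lee_fin ler_norm_sum.
  by rewrite -sumEFin; apply: lee_sum => i _; exact: supnorm_ge.
have summable : (\esum_(B in D) \sum_(i < q) supnorm (Phi B) < +oo)%E.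
  rewrite esum_sum => [|B i _ _]; last exact: le_trans (supnorm_ge (Phi B) (ws0 i)).
  by apply: lte_sum_pinfty => i _; exact: esum_supnorm_meeting_lt (ws0 i) Phi_sum DL.
exact: (@rsum_continuous _ _ (qconfig V O0 q) D _ _ dominated summable
  (@continuous_glue_sum s) _).
Qed.

Lemma continuous_H (s : {ffun L -> O0}) : continuous (fun ws : qconfig V O0 q => H Phi s ws).
Proof.
move=> ws0; rewrite /H; apply: cvgD.
  exact: (continuous_big add_continuous (fun B _ => @continuous_phi_in s B)).
by apply: cvgM; [exact: cvg_cst | apply: continuous_boundary_sum => B []].
Qed.

Lemma continuous_boltzmann_weight (s : {ffun L -> O0}) :
  continuous (fun ws : qconfig V O0 q => expR (- H Phi s ws)).
Proof.
move=> ws; apply: continuous_comp (cvgN (@continuous_H s ws)) _.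
exact: continuous_expR.
Qed.

Lemma Z_neq0 (s0 : {ffun L -> O0}) (ws : qconfig V O0 q) : Z Phi L ws != 0.
Proof.
rewrite psumr_neq0 => [|s _]; last exact: expR_ge0.
by apply/hasP; exists s0; rewrite ?mem_index_enum ?expR_gt0.
Qed.

End GibbsContinuity.

Theorem mainTheorem7 (V : countType) (O0 : finType) (R : realType) (q : nat)
  (Phi : potential V O0 R) :
  (0 < q)%N -> abs_summable_potential Phi ->
  quasilocal (@gamma V O0 R Phi q).
Proof.
move=> _ [Phi_meas Phi_sum] L A AL ws0.
have weight_cont := continuous_boltzmann_weight Phi_meas Phi_sum (q := q) (L := L).
have kernel_cont (s : {ffun L -> O0}) : continuous (fun ws : qconfig V O0 q =>
    q%:R^-1 * \sum_(i < q) \1_A (Defs.glue s (ws i)) : R).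
  move=> ws; apply: cvgM; first exact: cvg_cst.
  by apply: (continuous_big add_continuous) => i _; exact: continuous_glue_coordF.
rewrite /gamma; apply: cvgM; last first.
  apply: (continuous_big add_continuous) => s _ ws.
  exact: cvgM (weight_cont s ws) (kernel_cont s ws).
case: (pickP (fun _ : {ffun L -> O0} => true)) => [s0 _|no_config].
  apply: cvgV; first exact: Z_neq0 s0 ws0.
  exact: (continuous_big add_continuous (fun s _ => weight_cont s)).
(* No [s] exists, so [Z] is the empty sum and [Z^-1 = 0^-1 = 0]. *)
rewrite /Z big_pred0 // invr0.
under eq_cvg do rewrite big_pred0 // invr0.
exact: cvg_cst.
Qed.
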